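(* For $\mu\ge\lambda>0$ let \[\kappa(\lambda,\mu)=\frac\mu\lambda-\Big(\sqrt2\Big(\frac\mu\lambda-\frac12\Big)^{1/2}-\lambda^{1/2}\Big)^2-(1-\mu^{1/2})^2.\] For every $0<\lambda\le\mu$ such that $\kappa(\lambda,\mu)>0$, there exist a path $\gamma(t)=(\gamma_X(t),\gamma_Y(t))$, $t\in[0,1]$, and $\kappa_0>0$ such that (i) $\gamma(0)=(1/2,1/2)$ and $\gamma(1)=(\lambda,\mu)$; (ii) $\kappa(\gamma(t))\ge\kappa_0>0$ for all $t\in[0,1]$; (iii) $\gamma$ is piecewise linear and $|\gamma_X'(t)|\le20$ and $|\gamma_Y'(t)|\le20$ for all $t\in[0,1]$ at which $\gamma$ is differentiable; (iv) $\gamma_X(t)\in[3/2-\sqrt2,10]$ and $\gamma_Y(t)\in[3/2-\sqrt2,10]$ for all $t\in[0,1]$. *)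

From Stdlib Require Import Reals.
Open Scope R_scope.

Definition kappa (l m : R) : R :=
  m / l - (sqrt 2 * sqrt (m / l - 1 / 2) - sqrt l) ^ 2 - (1 - sqrt m) ^ 2.

Definition partition01 (p : nat -> R) (n : nat) : Prop :=
  p 0%nat = 0 /\ p n = 1 /\ (forall i : nat, (i < n)%nat -> p i < p (S i)).

Definition pl_path_slope_bound (gX gY : R -> R) (p : nat -> R) (n : nat) (B : R)
  : Prop :=
  partition01 p n /\
  forall i : nat, (i < n)%nat ->
    exists aX bX aY bY : R,
      Rabs aX <= B /\ Rabs aY <= B /\
      forall t : R, p i <= t <= p (S i) ->
        gX t = aX * t + bX /\ gY t = aY * t + bY.

From Stdlib Require Import Reals Lra Lia.
Open Scope R_scope.

(* On a segment along which x is constant or y/x is constant, y/x is affine in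
   the parameter, so by concavity of sqrt kappa is concave there and bounded
   below by its values at the endpoints.  The path runs through the corners
   (1/2, 1/2), (x, x), (x, r x), (l, m) with r = m/l, where x = p^2 and p is
   the maximiser of the concave quadratic s |-> kappa (s^2, r s^2): thus
   kappa (x, r x) >= kappa (l, m), and kappa > 0 somewhere on the ray forces
   p in [1/2, 3/2], which gives kappa >= 1/2 at the first two corners.  The box
   and slope bounds come from the estimate 2 c sqrt u <= c^2 + u, which shows
   that kappa > 0 and x <= y force x >= 3/2 - sqrt 2 and y < 7. *)

Definition kappa_simpl (x y : R) : R :=
  - (y / x) + 2 * sqrt (2 * y - x) - x + 2 * sqrt y - y.

Lemma kappa_eq_simpl x y : 0 < x -> x <= 2 * y -> kappa x y = kappa_simpl x y.
Proof.
  intros hx hxy. unfold kappa, kappa_simpl.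
  assert (E : sqrt 2 * sqrt (y / x - 1 / 2) = sqrt (2 * y - x) / sqrt x).
  { assert (0 <= y / x - 1 / 2).
    { apply Rmult_le_reg_r with (2 * x); [lra|].
      replace ((y / x - 1 / 2) * (2 * x)) with (2 * y - x) by (field; lra). lra. }
    rewrite <- sqrt_mult by lra.
    replace (2 * (y / x - 1 / 2)) with ((2 * y - x) / x) by (field; lra).
    apply sqrt_div_alt; lra. }
  rewrite E.
  assert (Ha := sqrt_sqrt (2 * y - x) ltac:(lra)).
  assert (Hs := sqrt_sqrt x ltac:(lra)).
  assert (Hb := sqrt_sqrt y ltac:(lra)).
  assert (Hsp := sqrt_lt_R0 x hx).
  set (a := sqrt (2 * y - x)) in *. set (s := sqrt x) in *. set (b := sqrt y) in *.
  replace ((a / s - s) ^ 2) with (a * a / (s * s) - 2 * a + s * s) by (field; lra).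
  replace ((1 - b) ^ 2) with (1 - 2 * b + b * b) by ring.
  rewrite Ha, Hs, Hb. field. lra.
Qed.

Lemma sqrt_amgm u c : 0 <= u -> 2 * c * sqrt u <= c * c + u.
Proof.
  intros hu. rewrite <- (sqrt_sqrt u hu) at 2.
  assert (0 <= (sqrt u - c) ^ 2) by apply pow2_ge_0. nra.
Qed.

Lemma kappa_simpl_amgm_bound c x y : 0 < c -> 0 < x -> x <= 2 * y ->
  c * kappa_simpl x y <= c * (- (y / x) - x - y) + 2 * (c * c) + 3 * y - x.
Proof.
  intros hc hx hxy. unfold kappa_simpl.
  assert (A := sqrt_amgm (2 * y - x) c ltac:(lra)).
  assert (B := sqrt_amgm y c ltac:(lra)).
  nra.
Qed.

Lemma kappa_simpl_diag x : 0 < x -> kappa_simpl x x = -1 + 4 * sqrt x - 2 * x.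
Proof.
  intros hx. unfold kappa_simpl.
  replace (x / x) with 1 by (field; lra).
  replace (2 * x - x) with x by ring.
  ring.
Qed.

Lemma kappa_simpl_diag_ge x : 1 / 4 <= x <= 9 / 4 -> 1 / 2 <= kappa_simpl x x.
Proof.
  intros hx. rewrite kappa_simpl_diag by lra.
  assert (Hs := sqrt_sqrt x ltac:(lra)). assert (Ps := sqrt_pos x).
  assert (1 / 2 <= sqrt x <= 3 / 2) by (split; nra).
  nra.
Qed.

Lemma kappa_simpl_le_diag s y : 0 < s -> s * s <= y -> 3 * s <= 1 + s * s ->
  kappa_simpl (s * s) y <= kappa_simpl (s * s) (s * s).
Proof.
  intros hs hy hsmall.
  assert (Hb := kappa_simpl_amgm_bound s (s * s) y hs ltac:(nra) ltac:(nra)).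
  rewrite kappa_simpl_diag, sqrt_square by nra.
  set (T := y / (s * s)) in Hb.
  assert (E : s * (s * T) = y) by (unfold T; field; lra).
  assert (0 <= (y - s * s) * (1 + s * s - 3 * s)) by (apply Rmult_le_pos; lra).
  assert (s * (s * (- T - s * s - y) + 2 * (s * s) + 3 * y - s * s)
            <= s * (s * (-1 + 4 * s - 2 * (s * s)))) by nra.
  apply Rmult_le_reg_l with s; [exact hs|].
  nra.
Qed.

Lemma kappa_simpl_pos_x_ge x y : 0 < x -> x <= y -> 0 < kappa_simpl x y ->
  3 / 2 - sqrt 2 <= x.
Proof.
  intros hx hxy hk.
  destruct (Rle_or_lt (3 / 2 - sqrt 2) x) as [h | h]; [exact h | exfalso].
  assert (Hq := sqrt_sqrt 2 ltac:(lra)). assert (Pq := sqrt_pos 2).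
  assert (Hs := sqrt_sqrt x ltac:(lra)). assert (Ps := sqrt_lt_R0 x hx).
  set (q := sqrt 2) in *. set (s := sqrt x) in *.
  assert (q14 : 1.4 < q) by nra.
  (* 3/2 - sqrt 2 = (1 - sqrt 2 / 2)^2, and 1 - sqrt 2 / 2 is the smaller root
     of 2 s^2 - 4 s + 1 = - kappa_simpl (s^2) (s^2). *)
  assert (hs : s < 1 - q / 2).
  { destruct (Rlt_or_le s (1 - q / 2)) as [h' | h']; [exact h' | nra]. }
  rewrite <- Hs in hxy, hk.
  assert (Hd := kappa_simpl_le_diag s y Ps hxy ltac:(nra)).
  rewrite kappa_simpl_diag, sqrt_square in Hd by nra.
  nra.
Qed.

Lemma kappa_simpl_pos_y_lt x y : 0 < x -> x <= y -> 0 < kappa_simpl x y -> y < 7.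
Proof.
  intros hx hxy hk.
  assert (Hb := kappa_simpl_amgm_bound 3 x y ltac:(lra) hx ltac:(lra)).
  assert (E : x * (y / x) = y) by (field; lra).
  assert (0 <= (x - 9 / 4) ^ 2) by apply pow2_ge_0.
  assert (0 < x * (6 - y / x - 4 / 3 * x)) by (apply Rmult_lt_0_compat; lra).
  nra.
Qed.

Lemma div_unit_interval u v : 0 <= u <= v -> 0 < v -> 0 <= u / v <= 1.
Proof.
  intros hu hv. split.
  - unfold Rdiv. apply Rmult_le_pos; [lra | apply Rlt_le, Rinv_0_lt_compat, hv].
  - apply Rmult_le_reg_r with v; [exact hv|].
    replace (u / v * v) with u by (field; lra). lra.
Qed.

Lemma Rabs_div_le d e B : 0 < e -> Rabs d <= B * e -> Rabs (d / e) <= B.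
Proof.
  intros he hd. unfold Rdiv.
  rewrite Rabs_mult, Rabs_inv, (Rabs_pos_eq e) by lra.
  apply Rmult_le_reg_r with e; [exact he|].
  replace (Rabs d * / e * e) with (Rabs d) by (field; lra). exact hd.
Qed.

Definition lerp (u v t : R) : R := (1 - t) * u + t * v.

Lemma sqrt_concave u v t : 0 <= u -> 0 <= v -> 0 <= t <= 1 ->
  lerp (sqrt u) (sqrt v) t <= sqrt (lerp u v t).
Proof.
  intros hu hv ht. unfold lerp.
  assert (Hu := sqrt_sqrt u hu). assert (Hv := sqrt_sqrt v hv).
  assert (Pu := sqrt_pos u). assert (Pv := sqrt_pos v).
  rewrite <- (sqrt_square ((1 - t) * sqrt u + t * sqrt v)) by nra.
  apply sqrt_le_1_alt.
  set (a := sqrt u) in *. set (b := sqrt v) in *.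
  rewrite <- Hu, <- Hv.
  assert (0 <= t * (1 - t) * (a - b) ^ 2) by (apply Rmult_le_pos; [nra | apply pow2_ge_0]).
  nra.
Qed.

Lemma div_lerp x0 y0 x1 y1 t : 0 < x0 -> 0 < x1 -> 0 <= t <= 1 ->
  x0 = x1 \/ y0 * x1 = y1 * x0 ->
  lerp y0 y1 t / lerp x0 x1 t = lerp (y0 / x0) (y1 / x1) t.
Proof.
  intros h0 h1 ht hray. unfold lerp.
  assert (0 < (1 - t) * x0 + t * x1) by nra.
  destruct hray as [<- | hray].
  - field. lra.
  - assert (E : y1 = y0 / x0 * x1).
    { apply Rmult_eq_reg_r with x0; [|lra].
      replace (y0 / x0 * x1 * x0) with (y0 * x1) by (field; lra). lra. }
    subst y1. field. lra.
Qed.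

Lemma kappa_simpl_lerp_concave x0 y0 x1 y1 t :
  0 < x0 -> 0 < x1 -> x0 <= 2 * y0 -> x1 <= 2 * y1 -> 0 <= t <= 1 ->
  x0 = x1 \/ y0 * x1 = y1 * x0 ->
  lerp (kappa_simpl x0 y0) (kappa_simpl x1 y1) t
    <= kappa_simpl (lerp x0 x1 t) (lerp y0 y1 t).
Proof.
  intros h0 h1 hy0 hy1 ht hray. unfold kappa_simpl.
  rewrite (div_lerp x0 y0 x1 y1 t) by assumption.
  replace (2 * lerp y0 y1 t - lerp x0 x1 t) with (lerp (2 * y0 - x0) (2 * y1 - x1) t)
    by (unfold lerp; ring).
  assert (S1 := sqrt_concave (2 * y0 - x0) (2 * y1 - x1) t ltac:(lra) ltac:(lra) ht).
  assert (S2 := sqrt_concave y0 y1 t ltac:(lra) ltac:(lra) ht).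
  unfold lerp in *. nra.
Qed.

Definition admissible (k x y : R) : Prop := 0 < x <= y /\ k <= kappa_simpl x y.

Lemma admissible_lerp k x0 y0 x1 y1 t :
  admissible k x0 y0 -> admissible k x1 y1 -> x0 = x1 \/ y0 * x1 = y1 * x0 ->
  0 <= t <= 1 -> admissible k (lerp x0 x1 t) (lerp y0 y1 t).
Proof.
  intros [hxy0 hk0] [hxy1 hk1] hray ht. split.
  - unfold lerp. split; nra.
  - eapply Rle_trans; [| apply kappa_simpl_lerp_concave; (assumption || lra)].
    unfold lerp. nra.
Qed.

Definition ray_peak (r : R) : R := (sqrt (2 * r - 1) + sqrt r) / (1 + r).

Lemma ray_peak_pos r : 1 / 2 <= r -> 0 < ray_peak r.
Proof.
  intros hr. unfold ray_peak.
  assert (0 < sqrt r) by (apply sqrt_lt_R0; lra).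
  assert (0 <= sqrt (2 * r - 1)) by apply sqrt_pos.
  apply Rdiv_lt_0_compat; lra.
Qed.

Lemma kappa_simpl_ray x r : 0 < x -> 1 / 2 <= r ->
  kappa_simpl x (r * x)
    = - r + 2 * sqrt x * (sqrt (2 * r - 1) + sqrt r) - (1 + r) * x.
Proof.
  intros hx hr. unfold kappa_simpl.
  replace (2 * (r * x) - x) with ((2 * r - 1) * x) by ring.
  rewrite (sqrt_mult (2 * r - 1) x), (sqrt_mult r x) by lra.
  field. lra.
Qed.

Lemma kappa_simpl_ray_square x r : 0 < x -> 1 / 2 <= r ->
  kappa_simpl x (r * x)
    = (1 + r) * (ray_peak r * ray_peak r) - r - (1 + r) * (sqrt x - ray_peak r) ^ 2.
Proof.
  intros hx hr. rewrite kappa_simpl_ray by lra.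
  assert (Hs := sqrt_sqrt x ltac:(lra)).
  unfold ray_peak. rewrite <- Hs at 2. field. lra.
Qed.

Lemma kappa_simpl_ray_le_peak x r : 0 < x -> 1 / 2 <= r ->
  kappa_simpl x (r * x)
    <= kappa_simpl (ray_peak r * ray_peak r) (r * (ray_peak r * ray_peak r)).
Proof.
  intros hx hr. assert (hp := ray_peak_pos r hr).
  rewrite !kappa_simpl_ray_square by nra.
  rewrite sqrt_square by lra.
  assert (0 <= (sqrt x - ray_peak r) ^ 2) by apply pow2_ge_0.
  nra.
Qed.

Lemma ray_peak_le r : 1 / 2 <= r -> ray_peak r <= 3 / 2.
Proof.
  intros hr. unfold ray_peak.
  assert (sqrt (2 * r - 1) <= r).
  { assert (Hr := sqrt_amgm (2 * r - 1) 1 ltac:(lra)). lra. }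
  assert (sqrt r <= (1 + r) / 2).
  { assert (Hr := sqrt_amgm r 1 ltac:(lra)). lra. }
  apply Rmult_le_reg_r with (1 + r); [lra|].
  replace ((sqrt (2 * r - 1) + sqrt r) / (1 + r) * (1 + r))
    with (sqrt (2 * r - 1) + sqrt r) by (field; lra).
  lra.
Qed.

Lemma ray_peak_ge x r : 0 < x -> 1 / 2 <= r -> 0 < kappa_simpl x (r * x) ->
  1 / 2 <= ray_peak r.
Proof.
  intros hx hr hk. rewrite kappa_simpl_ray_square in hk by lra.
  assert (hp := ray_peak_pos r hr).
  assert (0 <= (sqrt x - ray_peak r) ^ 2) by apply pow2_ge_0.
  assert (r < (1 + r) * (ray_peak r * ray_peak r)) by nra.
  assert (1 / 4 < ray_peak r * ray_peak r) by nra.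
  nra.
Qed.

Lemma ray_peak_corner l m : 0 < l -> l <= m -> 0 < kappa_simpl l m ->
  exists x, 1 / 4 <= x <= 9 / 4 /\ kappa_simpl l m <= kappa_simpl x (m / l * x).
Proof.
  intros hl hlm hk.
  assert (hr : 1 <= m / l) by (apply Rmult_le_reg_r with l; [| field_simplify]; lra).
  assert (hm : m / l * l = m) by (field; lra).
  pose proof (ray_peak_ge l (m / l) hl ltac:(lra) ltac:(rewrite hm; exact hk)).
  pose proof (ray_peak_le (m / l) ltac:(lra)).
  exists (ray_peak (m / l) * ray_peak (m / l)). split; [split; nra |].
  rewrite <- hm at 1. apply kappa_simpl_ray_le_peak; lra.
Qed.

Section Polyline.

Variables a b : R.
Hypothesis hab : 0 < a /\ a < b /\ b < 1.

Definition polyline3 (v0 v1 v2 v3 t : R) : R :=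
  if Rle_dec t a then lerp v0 v1 (t / a)
  else if Rle_dec t b then lerp v1 v2 ((t - a) / (b - a))
  else lerp v2 v3 ((t - b) / (1 - b)).

Definition polyline3_nodes (i : nat) : R :=
  match i with 0%nat => 0 | 1%nat => a | 2%nat => b | _ => 1 end.

Definition polyline3_values (v0 v1 v2 v3 : R) (i : nat) : R :=
  match i with 0%nat => v0 | 1%nat => v1 | 2%nat => v2 | _ => v3 end.

Definition polyline3_slope (v0 v1 v2 v3 : R) (i : nat) : R :=
  (polyline3_values v0 v1 v2 v3 (S i) - polyline3_values v0 v1 v2 v3 i)
    / (polyline3_nodes (S i) - polyline3_nodes i).

Lemma polyline3_0 v0 v1 v2 v3 : polyline3 v0 v1 v2 v3 0 = v0.
Proof.
  unfold polyline3, lerp. destruct (Rle_dec 0 a); [field | ]; lra.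
Qed.

Lemma polyline3_1 v0 v1 v2 v3 : polyline3 v0 v1 v2 v3 1 = v3.
Proof.
  unfold polyline3, lerp.
  destruct (Rle_dec 1 a); [lra|]. destruct (Rle_dec 1 b); [lra|]. field. lra.
Qed.

Lemma polyline3_nodes_lt i : (i < 3)%nat -> polyline3_nodes i < polyline3_nodes (S i).
Proof. intros hi. destruct i as [|[|[|i]]]; [cbn; lra .. | lia]. Qed.

Lemma polyline3_forall (P : R -> R -> Prop) x0 x1 x2 x3 y0 y1 y2 y3 :
  (forall tau, 0 <= tau <= 1 -> P (lerp x0 x1 tau) (lerp y0 y1 tau)) ->
  (forall tau, 0 <= tau <= 1 -> P (lerp x1 x2 tau) (lerp y1 y2 tau)) ->
  (forall tau, 0 <= tau <= 1 -> P (lerp x2 x3 tau) (lerp y2 y3 tau)) ->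
  forall t, 0 <= t <= 1 -> P (polyline3 x0 x1 x2 x3 t) (polyline3 y0 y1 y2 y3 t).
Proof.
  intros H01 H12 H23 t ht. unfold polyline3.
  destruct (Rle_dec t a); [| destruct (Rle_dec t b)].
  - apply H01, div_unit_interval; lra.
  - apply H12, div_unit_interval; lra.
  - apply H23, div_unit_interval; lra.
Qed.

Lemma polyline3_affine v0 v1 v2 v3 i t : (i < 3)%nat ->
  polyline3_nodes i <= t <= polyline3_nodes (S i) ->
  polyline3 v0 v1 v2 v3 t
    = polyline3_slope v0 v1 v2 v3 i * t
      + (polyline3_values v0 v1 v2 v3 i
         - polyline3_slope v0 v1 v2 v3 i * polyline3_nodes i).
Proof.
  intros hi ht. unfold polyline3, polyline3_slope, lerp.
  destruct i as [|[|[|i]]]; [cbn in * .. | lia].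
  - destruct (Rle_dec t a); [field | ]; lra.
  - destruct (Rle_dec t a).
    + replace t with a by lra. field. lra.
    + destruct (Rle_dec t b); [field | ]; lra.
  - destruct (Rle_dec t a); [lra|]. destruct (Rle_dec t b).
    + replace t with b by lra. field. lra.
    + field. lra.
Qed.

Lemma polyline3_slope_bound B x0 x1 x2 x3 y0 y1 y2 y3 :
  (forall i, (i < 3)%nat ->
     Rabs (polyline3_values x0 x1 x2 x3 (S i) - polyline3_values x0 x1 x2 x3 i)
       <= B * (polyline3_nodes (S i) - polyline3_nodes i)) ->
  (forall i, (i < 3)%nat ->
     Rabs (polyline3_values y0 y1 y2 y3 (S i) - polyline3_values y0 y1 y2 y3 i)
       <= B * (polyline3_nodes (S i) - polyline3_nodes i)) ->
  pl_path_slope_bound (polyline3 x0 x1 x2 x3) (polyline3 y0 y1 y2 y3)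
    polyline3_nodes 3 B.
Proof.
  intros hX hY. split.
  - split; [reflexivity|]. split; [reflexivity|]. exact polyline3_nodes_lt.
  - intros i hi. assert (hlt := polyline3_nodes_lt i hi).
    exists (polyline3_slope x0 x1 x2 x3 i), (polyline3_values x0 x1 x2 x3 i
             - polyline3_slope x0 x1 x2 x3 i * polyline3_nodes i),
           (polyline3_slope y0 y1 y2 y3 i), (polyline3_values y0 y1 y2 y3 i
             - polyline3_slope y0 y1 y2 y3 i * polyline3_nodes i).
    split; [| split]; [apply Rabs_div_le; auto; lra .. |].
    intros t ht. split; apply polyline3_affine; assumption.
Qed.

Lemma admissible_corner_path k u x l m t :
  admissible k u u -> admissible k x x -> admissible k x (m / l * x) ->
  admissible k l m -> 0 <= t <= 1 ->
  admissible k (polyline3 u x x l t) (polyline3 u x (m / l * x) m t).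
Proof.
  intros W0 W1 W2 W3. assert (hl : 0 < l) by apply W3.
  apply polyline3_forall; intros tau htau; apply admissible_lerp; try assumption.
  - right. ring.
  - left. reflexivity.
  - right. field. lra.
Qed.

End Polyline.

Theorem lemma5p5 (l m : R) (hl : 0 < l) (hlm : l <= m) (hk : 0 < kappa l m) :
  exists (gX gY : R -> R) (k0 : R),
    0 < k0 /\
    (* (i) *)
    (gX 0 = 1 / 2 /\ gY 0 = 1 / 2 /\ gX 1 = l /\ gY 1 = m) /\
    (* (ii) *)
    (forall t : R, 0 <= t <= 1 -> k0 <= kappa (gX t) (gY t)) /\
    (* (iii) *)
    (exists (n : nat) (p : nat -> R), pl_path_slope_bound gX gY p n 20) /\
    (* (iv) *)
    (forall t : R, 0 <= t <= 1 ->
       3 / 2 - sqrt 2 <= gX t <= 10 /\ 3 / 2 - sqrt 2 <= gY t <= 10).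
Proof.
  rewrite kappa_eq_simpl in hk by lra.
  destruct (ray_peak_corner l m hl hlm hk) as (x & hx & hpeak).
  assert (hr : 1 <= m / l) by (apply Rmult_le_reg_r with l; [| field_simplify]; lra).
  set (k0 := Rmin (kappa_simpl l m) (1 / 2)).
  assert (k0l : k0 <= kappa_simpl l m) by apply Rmin_l.
  assert (k0r : k0 <= 1 / 2) by apply Rmin_r.
  assert (hk0 : 0 < k0) by (apply Rmin_glb_lt; lra).
  assert (hm7 := kappa_simpl_pos_y_lt l m hl hlm hk).
  assert (hy7 := kappa_simpl_pos_y_lt x (m / l * x) ltac:(lra) ltac:(nra) ltac:(lra)).
  (* The first piece moves each coordinate by at most 7/4, the others by less
     than 7, whence the breakpoints 1/4 and 5/8. *)
  set (gX := polyline3 (1 / 4) (5 / 8) (1 / 2) x x l).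
  set (gY := polyline3 (1 / 4) (5 / 8) (1 / 2) x (m / l * x) m).
  assert (on_path : forall t, 0 <= t <= 1 -> admissible k0 (gX t) (gY t)).
  { intros t ht.
    pose proof (kappa_simpl_diag_ge (1 / 2) ltac:(lra)).
    pose proof (kappa_simpl_diag_ge x hx).
    apply admissible_corner_path; [lra | split; [split; nra | lra] .. | exact ht]. }
  exists gX, gY, k0. split; [exact hk0 |].
  split; [unfold gX, gY; rewrite !polyline3_0, !polyline3_1 by lra; lra |].
  split; [intros t ht; destruct (on_path t ht); rewrite kappa_eq_simpl; lra |].
  split.
  - exists 3%nat, (polyline3_nodes (1 / 4) (5 / 8)).
    apply polyline3_slope_bound; [lra | ..];
      intros [|[|[|i]]] hi; try lia; cbn; apply Rabs_le; nra.
  - intros t ht. destruct (on_path t ht) as [hxy hkt].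
    pose proof (kappa_simpl_pos_x_ge (gX t) (gY t) ltac:(lra) ltac:(lra) ltac:(lra)).
    pose proof (kappa_simpl_pos_y_lt (gX t) (gY t) ltac:(lra) ltac:(lra) ltac:(lra)).
    lra.
Qed.
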